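(* Let $\gamma:\mathbb{Z}_{\ge1}\to\mathbb{R}$ be a function with $\gamma(m)\ge m$ for all integers $m\ge 1$. Let $\lambda\ge 6$ be an integer such that $\gamma(\lambda)\le \frac12\lambda\log_2\lambda-\frac14\lambda$, and let $r$ be an integer with $2^{\gamma(\lambda)}\le r\le 2^{2\gamma(\lambda)}(1+\lambda^2)$ such that $p=r^{2^\lambda}+1$ is prime. Let $s=\log_2 p$ and let $\lambda'$ be the smallest integer with $2^{\lambda'}\ge\log_2 s$. Then there exists a power of two $\beta\ge1$ such that $$2\beta\log_2 r+\lambda-\log_2\beta\le 2\,\gamma(\lambda')\,2^{\lambda'}.$$
   Context: $\log_2$ denotes the logarithm in base $2$. A power of two means an integer $2^k$ with $k\ge 0$. *)

From Stdlib Require Import Reals ZArith Znumtheory.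
Open Scope R_scope.

Definition log2 (x : R) : R := ln x / ln 2.

(* The witness [beta = 1] already works.  Put [a = log2 lam >= 5/2] and
   [L = log2 r].  The bounds on [r] give [gamma lam <= L <= 2 gamma lam + 1 + 2a],
   and [log2 log2 p >= lam + log2 L >= lam + a] forces [2^lam' >= lam + a],
   hence [lam' >= a] and [gamma lam' 2^lam' >= a (lam + a)].  The hypothesis on
   [gamma lam] then reduces the claim to [a^2 - 2a - 1 >= 0], true for [a >= 5/2]. *)
From Stdlib Require Import Reals ZArith Znumtheory Lra Lia.
Open Scope R_scope.

Lemma ln2_pos : 0 < ln 2.
Proof. rewrite <- ln_1. apply ln_increasing; lra. Qed.

Lemma log2_le x y : 0 < x -> x <= y -> log2 x <= log2 y.
Proof.
  intros Hx Hxy. unfold log2. apply Rmult_le_compat_r.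
  - left. apply Rinv_0_lt_compat, ln2_pos.
  - destruct Hxy as [H|H]; [left; now apply ln_increasing | right; now subst].
Qed.

Lemma log2_1 : log2 1 = 0.
Proof. unfold log2. rewrite ln_1. lra. Qed.

Lemma log2_mult x y : 0 < x -> 0 < y -> log2 (x * y) = log2 x + log2 y.
Proof.
  intros. unfold log2. rewrite ln_mult by auto. pose proof ln2_pos. field. lra.
Qed.

Lemma log2_pow x n : 0 < x -> log2 (x ^ n) = INR n * log2 x.
Proof.
  intros. unfold log2. rewrite ln_pow by auto. pose proof ln2_pos. field. lra.
Qed.

Lemma log2_2pow n : log2 (2 ^ n) = INR n.
Proof.
  rewrite log2_pow by lra. unfold log2. pose proof ln2_pos. field. lra.
Qed.

Lemma log2_Rpower2 y : log2 (Rpower 2 y) = y.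
Proof.
  unfold log2, Rpower. rewrite ln_exp. pose proof ln2_pos. field. lra.
Qed.

Lemma Rpower2_le_log2 x y : Rpower 2 y <= x -> y <= log2 x.
Proof.
  intros Hxy. rewrite <- (log2_Rpower2 y).
  apply log2_le; [apply exp_pos | exact Hxy].
Qed.

Lemma log2_le_pow2 x n : 0 < x -> x <= 2 ^ n -> log2 x <= INR n.
Proof. intros Hx Hxn. rewrite <- log2_2pow. now apply log2_le. Qed.

Lemma log2_ge_5_2 x : 6 <= x -> 5 / 2 <= log2 x.
Proof.
  intros Hx.
  assert (H32 : log2 (2 ^ 5) <= log2 (6 * 6)) by (apply log2_le; simpl; lra).
  rewrite log2_2pow, log2_mult in H32 by lra. simpl INR in H32.
  assert (log2 6 <= log2 x) by (apply log2_le; lra). lra.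
Qed.

Lemma log2_1_plus_sqr_le x : 1 <= x -> log2 (1 + x ^ 2) <= 1 + 2 * log2 x.
Proof.
  intros Hx.
  assert (H : log2 (1 + x ^ 2) <= log2 (2 * x ^ 2)) by (apply log2_le; nra).
  rewrite log2_mult, log2_pow in H by nra.
  replace (log2 2) with 1 in H by (unfold log2; pose proof ln2_pos; field; lra).
  simpl INR in H. lra.
Qed.

Lemma log2_log2_pow2_succ y n :
  1 < y -> INR n + log2 (log2 y) <= log2 (log2 (y ^ (2 ^ n) + 1)).
Proof.
  intros Hy.
  assert (Hly : 0 < log2 y).
  { unfold log2. apply Rdiv_lt_0_compat; [rewrite <- ln_1; apply ln_increasing; lra | apply ln2_pos]. }
  assert (HN : 0 < 2 ^ n) by (apply pow_lt; lra).
  rewrite <- (log2_2pow n) at 1. rewrite <- log2_mult by lra.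
  apply log2_le; [nra|].
  apply Rle_trans with (log2 (y ^ (2 ^ n)%nat)).
  - rewrite log2_pow, pow_INR by lra. simpl INR. replace (1 + 1) with 2 by lra. lra.
  - pose proof (pow_lt y (2 ^ n) ltac:(lra)). apply log2_le; lra.
Qed.

Lemma final_budget lam a L g G X :
  5 / 2 <= a -> L <= 2 * g + 1 + 2 * a ->
  g <= / 2 * lam * a - / 4 * lam ->
  0 <= lam -> a <= G -> lam + a <= X ->
  2 * L + lam <= 2 * G * X.
Proof.
  intros. assert (a * (lam + a) <= G * X) by (apply Rmult_le_compat; lra).
  assert (5 / 2 * a <= a * a) by nra. lra.
Qed.

Theorem proposition5p1
  (gamma : nat -> R)
  (hgamma : forall m : nat, (1 <= m)%nat -> INR m <= gamma m)
  (lam : nat) (hlam : (6 <= lam)%nat)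
  (hgl : gamma lam <= / 2 * INR lam * log2 (INR lam) - / 4 * INR lam)
  (r : Z)
  (hr1 : Rpower 2 (gamma lam) <= IZR r)
  (hr2 : IZR r <= Rpower 2 (2 * gamma lam) * (1 + INR lam ^ 2))
  (hp : prime (r ^ Z.of_nat (2 ^ lam) + 1)%Z)
  (lam' : nat)
  (hlam'1 : log2 (log2 (IZR (r ^ Z.of_nat (2 ^ lam) + 1))) <= 2 ^ lam')
  (hlam'2 : forall k : Z,
      log2 (log2 (IZR (r ^ Z.of_nat (2 ^ lam) + 1))) <= powerRZ 2 k ->
      (Z.of_nat lam' <= k)%Z) :
  exists k : nat,
    let beta := 2 ^ k in
    2 * beta * log2 (IZR r) + INR lam - log2 beta
      <= 2 * gamma lam' * 2 ^ lam'.
Proof.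
  exists 0%nat. cbv zeta. simpl pow. rewrite log2_1.
  set (a := log2 (INR lam)) in hgl |- *.
  assert (H6 : 6 <= INR lam) by (replace 6 with (INR 6) by (simpl; lra); now apply le_INR).
  assert (ha : 5 / 2 <= a) by now apply log2_ge_5_2.
  assert (hgam : INR lam <= gamma lam) by (apply hgamma; lia).
  assert (Hr : 1 < IZR r).
  { rewrite <- (Rpower_O 2) by lra.
    apply Rlt_le_trans with (Rpower 2 (gamma lam)); [apply Rpower_lt|]; lra. }
  assert (hL1 : gamma lam <= log2 (IZR r)) by now apply Rpower2_le_log2.
  assert (hL2 : log2 (IZR r) <= 2 * gamma lam + 1 + 2 * a).
  { pose proof (log2_1_plus_sqr_le (INR lam) ltac:(lra)).
    apply log2_le in hr2; [|lra].
    rewrite log2_mult, log2_Rpower2 in hr2 by (apply exp_pos || nra). unfold a; lra. }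
  assert (hX : INR lam + a <= 2 ^ lam').
  { assert (a <= log2 (log2 (IZR r))) by (apply log2_le; lra).
    pose proof (log2_log2_pow2_succ (IZR r) lam ltac:(lra)).
    rewrite plus_IZR, <- pow_IZR in hlam'1. lra. }
  assert (hl' : a <= INR lam').
  { apply Rle_trans with (log2 (INR lam + a)); [apply log2_le; lra|].
    apply log2_le_pow2; lra. }
  assert (hlam'pos : (1 <= lam')%nat) by (destruct lam'; [simpl in hX; lra | lia]).
  pose proof (hgamma lam' hlam'pos) as hgam'.
  pose proof (final_budget (INR lam) a (log2 (IZR r)) (gamma lam) (gamma lam') (2 ^ lam')).
  lra.
Qed.
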